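(* There exists an invertible $25\times25$ binary matrix $A'$ such that the linear kernel $g({\bf u})={\bf u}A'$ has partial distance sequence $(1,2,2,2,2,2,4,4,4,4,4,4,4,8,8,8,8,8,8,8,12,12,12,16,16)$. Consequently $E_{25}\ge\frac1{25}\sum_{i=0}^{24}\log_{25}D_{min}^{(i)}\approx0.50608$.
   Context: A kernel of dimension $\ell$ is a bijection $g:\{0,1\}^\ell\to\{0,1\}^\ell$; a linear kernel is $g({\bf u})={\bf u}G$ over $\mathbb{F}_2$ for an invertible $\ell\times\ell$ binary matrix $G$. ${\bf a}\bullet{\bf b}$ denotes concatenation, $d_H$ Hamming distance. Partial distances: $D_{min}^{(i)}=\min\{d_H(g({\bf w}\bullet 0\bullet{\bf u}),g({\bf w}\bullet 1\bullet {\bf v})) : {\bf w}\in\{0,1\}^i,\ {\bf u},{\bf v}\in\{0,1\}^{\ell-i-1}\}$, $i=0,\dots,\ell-1$; exponent $E(g)=\frac1\ell\sum_{i}\log_\ell D_{min}^{(i)}$; $E_\ell=\max_g E(g)$ over all kernels of dimension $\ell$. *)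

From HB Require Import structures.
From mathcomp Require Import all_boot all_order all_algebra.
Set Implicit Arguments. Unset Strict Implicit. Unset Printing Implicit Defensive.
Import GRing.Theory.
Local Open Scope ring_scope.

Notation bvec l := 'rV['F_2]_l.

Definition dH (l : nat) (x y : bvec l) : nat := #|[set j : 'I_l | x 0 j != y 0 j]|.

Definition linker (l : nat) (G : 'M['F_2]_l) (u : bvec l) : bvec l := u *m G.

(* The pairs (w.0.u, w.1.v): x and y agree on the first i coordinates,
   x_i = 0 and y_i = 1. *)
Definition pd_pair (l : nat) (i : 'I_l) (x y : bvec l) : bool :=
  [forall j : 'I_l, ((j < i)%N ==> (x 0 j == y 0 j))] && (x 0 i == 0) && (y 0 i == 1).

(* partial distance D_min^(i) of a kernel g : minimum of d_H(g x, g y) over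
   such pairs (the set of pairs is nonempty, so the default l.+1 is never the
   value). *)
Definition pdist (l : nat) (g : bvec l -> bvec l) (i : 'I_l) : nat :=
  \big[minn/l.+1]_(p : bvec l * bvec l | pd_pair i p.1 p.2) dH (g p.1) (g p.2).

Definition seq25 : seq nat :=
  [:: 1; 2; 2; 2; 2; 2; 4; 4; 4; 4; 4; 4; 4; 8; 8; 8; 8; 8; 8; 8; 12; 12; 12; 16; 16]%N.

From HB Require Import structures.
From mathcomp Require Import all_boot all_order all_algebra.
Set Implicit Arguments. Unset Strict Implicit. Unset Printing Implicit Defensive.
Import Order.TTheory GRing.Theory.
Local Open Scope ring_scope.

(* The kernel is given explicitly, together with its inverse.  The pair
   (0, e_i) is admissible at index i and its images differ by row i of A,
   whose weight is the claimed D_i.  Conversely, the images of an admissible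
   pair differ by zA, where z has its leading one at position i, so it
   suffices to bound the weight of zA from below.  For i >= 13 there are at
   most 2^11 such z, checked exhaustively.  For i < 13 the claimed value is at
   most 4, so only codewords c = zA of weight at most 3 matter; for each of
   the 2626 such c, the leading position of z = c A^-1 is checked. *)

Lemma pdist_eq (l : nat) (g : bvec l -> bvec l) (i : 'I_l) (x0 y0 : bvec l) (d : nat) :
  pd_pair i x0 y0 -> dH (g x0) (g y0) = d ->
  (forall x y, pd_pair i x y -> (d <= dH (g x) (g y))%N) -> pdist g i = d.
Proof.
move=> pd0 eq_d lower; apply/eqP; rewrite /pdist -minEnat eqn_leq -!leEnat.
apply/andP; split; first by rewrite -eq_d; exact: (@bigmin_le_cond _ _ _ _ (x0, y0)).
apply/bigmin_geP; split; last by case=> x y /lower.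
by rewrite -eq_d leEnat leqW // (leq_trans (max_card _)) ?card_ord.
Qed.

Lemma dH_sub (l : nat) (x y : bvec l) : dH x y = dH 0 (y - x).
Proof. by apply: eq_card => j; rewrite !inE !mxE (eq_sym 0) subr_eq0 eq_sym. Qed.

Lemma dH_linker (l : nat) (G : 'M['F_2]_l) (x y : bvec l) :
  dH (linker G x) (linker G y) = dH 0 ((y - x) *m G).
Proof. by rewrite dH_sub /linker mulmxBl. Qed.

Lemma pd_pair_delta (l : nat) (i : 'I_l) : pd_pair i 0 (delta_mx 0 i).
Proof.
apply/andP; split; [apply/andP; split|]; rewrite ?mxE ?eqxx //.
apply/forallP => j; apply/implyP => ltji.
have /negbTE neq_ji : j != i by rewrite -val_eqE ltn_eqF.
by rewrite !mxE neq_ji andbF.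
Qed.

Lemma split_find_id (s : seq bool) :
  has id s -> s = nseq (find id s) false ++ true :: drop (find id s).+1 s.
Proof. by elim: s => //= [[]] s IH //=; rewrite ?drop0 // => /IH {1}->. Qed.

Lemma find_id_eq (s : seq bool) (i : nat) :
  nth false s i -> (forall k, (k < i)%N -> ~~ nth false s k) -> find id s = i.
Proof.
move=> si before; case: (ltngtP (find id s) i) => // [lt | gt].
  have lt_i_s : (i < size s)%N.
    by rewrite ltnNge; apply: contraL si => /(nth_default false) ->.
  have has_s : has id s by apply/(has_nthP false); exists i.
  by have := nth_find false has_s; rewrite (negPf (before _ lt)).
by move: si; rewrite (before_find false gt).
Qed.

Definition bitF (b : bool) : 'F_2 := b%:R.

Lemma bitF_eq1 (b : bool) : (bitF b == 1) = b.
Proof. by case: b. Qed.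

Lemma eq1_bitF (a : 'F_2) : bitF (a == 1) = a.
Proof. by case: a => [[|[|n]] //= lt_a]; apply/val_inj. Qed.

Lemma bitF_and (a b : bool) : bitF (a && b) = bitF a * bitF b.
Proof. by case: a; case: b; rewrite /= ?mulr1 ?mulr0. Qed.

Lemma bitF_addb (a b : bool) : bitF (a (+) b) = bitF a + bitF b.
Proof. by case: a; case: b; apply/val_inj. Qed.

Lemma F2_neqE (a b : 'F_2) : (a != b) = (b - a == 1).
Proof. by case: a => [[|[|m]] ?]; case: b => [[|[|n]] ?]. Qed.

Definition parity (s : seq bool) : bool := foldr addb false s.

Lemma bitF_parity (s : seq bool) : bitF (parity s) = \sum_(b <- s) bitF b.
Proof. by elim: s => [|b s IH]; rewrite ?big_nil ?big_cons //= bitF_addb IH. Qed.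

Definition ent (t : seq (seq nat)) (i j : nat) : bool := nth 0%N (nth [::] t i) j == 1%N.

Section BitModel.
Variable l : nat.
Implicit Types (x : bvec l) (t : seq (seq nat)).

Definition bits x : seq bool := [seq x 0 j == 1 | j <- enum 'I_l].
Definition bmx t : 'M['F_2]_l := \matrix_(i, j) bitF (ent t i j).
Definition brow t (i : nat) : seq bool := [seq ent t i j | j <- iota 0 l].
Definition bmul (z : seq bool) t : seq bool :=
  [seq parity [seq nth false z k && ent t k j | k <- iota 0 l] | j <- iota 0 l].
Definition ebits (i : nat) : seq bool := [seq j == i | j <- iota 0 l]%N.

Lemma size_bits x : size (bits x) = l.
Proof. by rewrite size_map size_enum_ord. Qed.

Lemma nth_bits x (j : 'I_l) : nth false (bits x) j = (x 0 j == 1).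
Proof. by rewrite (nth_map j) ?size_enum_ord // nth_ord_enum. Qed.

Lemma bits_inj : injective bits.
Proof.
move=> x y eq_xy; apply/rowP => j.
by rewrite -[x 0 j]eq1_bitF -[y 0 j]eq1_bitF -!nth_bits eq_xy.
Qed.

Lemma count_bits x : count id (bits x) = dH 0 x.
Proof.
rewrite count_map -sum1_count big_enum_cond /dH -sum1_card; apply: eq_bigl => j.
by rewrite /= inE mxE F2_neqE subr0.
Qed.

Lemma bits_mulmx x t : bits (x *m bmx t) = bmul (bits x) t.
Proof.
apply: (@eq_from_nth _ false); first by rewrite size_bits size_map size_iota.
move=> k; rewrite size_bits => lt_k; pose j := Ordinal lt_k.
rewrite -[k]/(val j) nth_bits (nth_map 0%N) ?size_iota // nth_iota //= mxE.
rewrite -[parity _]bitF_eq1 bitF_parity big_map; congr (_ == 1).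
have -> : iota 0 l = index_iota 0 l by rewrite /index_iota subn0.
rewrite big_mkord; apply: eq_bigr => k' _.
by rewrite mxE bitF_and nth_bits eq1_bitF.
Qed.

Lemma bits_row t (i : 'I_l) : bits (row i (bmx t)) = brow t i.
Proof.
rewrite /bits /brow -val_enum_ord -map_comp; apply: eq_map => j.
by rewrite /= !mxE bitF_eq1.
Qed.

Lemma bits_delta (i : 'I_l) : bits (delta_mx 0 i) = ebits i.
Proof.
rewrite /bits /ebits -val_enum_ord -[RHS]map_comp; apply: eq_map => j.
by rewrite /= mxE eqxx val_eqE; case: (j == i).
Qed.

Lemma bmx_mulmx_eq1 t t' :
  all (fun i => bmul (brow t i) t' == ebits i) (iota 0 l) ->
  bmx t *m bmx t' = 1%:M.
Proof.
move/allP=> inv; apply/row_matrixP => i; apply: bits_inj.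
rewrite row_mul bits_mulmx bits_row row1 bits_delta; apply/eqP/inv.
by rewrite mem_iota add0n ltn_ord.
Qed.

Lemma find_bits_pd_pair (i : 'I_l) x y : pd_pair i x y -> find id (bits (y - x)) = i.
Proof.
case/andP=> /andP[/forallP agree /eqP x_i] /eqP y_i.
have bits_sub (j : 'I_l) : nth false (bits (y - x)) j = (x 0 j != y 0 j).
  by rewrite nth_bits !mxE F2_neqE.
apply: find_id_eq => [|k lt_ki]; first by rewrite bits_sub x_i y_i.
have lt_kl : (k < l)%N := ltn_trans lt_ki (ltn_ord i).
by rewrite -[k]/(val (Ordinal lt_kl)) bits_sub negbK (implyP (agree _)).
Qed.

End BitModel.

Fixpoint bitseqs (n w : nat) : seq (seq bool) :=
  if n is n'.+1 then
    map (cons false) (bitseqs n' w) ++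
    (if w is w'.+1 then map (cons true) (bitseqs n' w') else [::])
  else [:: [::]].

Lemma mem_bitseqs (s : seq bool) (w : nat) :
  (count id s <= w)%N -> s \in bitseqs (size s) w.
Proof.
elim: s w => [|[] s IH] w //= le_sw; rewrite mem_cat.
  by case: w le_sw => // w; rewrite add1n ltnS => /IH s_in; rewrite map_f ?orbT.
by rewrite map_f ?IH.
Qed.

Definition A25 : seq (seq nat) := [::
  [:: 0; 0; 0; 0; 0; 0; 0; 0; 0; 0; 0; 0; 0; 0; 0; 0; 0; 0; 0; 0; 0; 0; 0; 0; 1];
  [:: 0; 0; 0; 0; 0; 1; 0; 0; 0; 0; 0; 0; 0; 1; 0; 0; 0; 0; 0; 0; 0; 0; 0; 0; 0];
  [:: 0; 0; 0; 0; 0; 0; 0; 0; 0; 0; 0; 0; 0; 0; 0; 0; 1; 0; 0; 0; 0; 0; 0; 0; 1];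
  [:: 0; 0; 0; 0; 0; 0; 0; 0; 0; 0; 0; 0; 0; 0; 0; 0; 0; 0; 0; 0; 1; 0; 1; 0; 0];
  [:: 1; 0; 0; 0; 0; 0; 0; 0; 0; 0; 0; 1; 0; 0; 0; 0; 0; 0; 0; 0; 0; 0; 0; 0; 0];
  [:: 0; 0; 0; 0; 0; 0; 0; 0; 0; 0; 0; 0; 1; 0; 0; 0; 0; 0; 0; 0; 0; 0; 1; 0; 0];
  [:: 1; 0; 0; 0; 0; 0; 0; 0; 0; 0; 0; 1; 0; 0; 1; 0; 0; 0; 1; 0; 0; 0; 0; 0; 0];
  [:: 0; 0; 0; 0; 0; 0; 0; 0; 1; 0; 0; 0; 1; 0; 0; 0; 0; 0; 0; 0; 0; 0; 1; 0; 1];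
  [:: 1; 0; 0; 1; 0; 0; 0; 0; 0; 1; 0; 0; 0; 0; 0; 0; 0; 0; 0; 0; 0; 1; 0; 0; 0];
  [:: 0; 0; 1; 0; 0; 0; 0; 0; 0; 0; 1; 0; 0; 0; 0; 0; 1; 0; 0; 0; 1; 0; 0; 0; 0];
  [:: 0; 0; 0; 0; 1; 0; 0; 1; 0; 0; 0; 0; 0; 1; 0; 0; 0; 0; 1; 0; 0; 0; 0; 0; 0];
  [:: 0; 1; 0; 0; 0; 0; 1; 0; 0; 0; 0; 0; 0; 0; 0; 0; 1; 0; 0; 0; 0; 1; 0; 0; 0];
  [:: 0; 0; 0; 1; 0; 1; 0; 0; 0; 0; 1; 0; 0; 0; 0; 0; 0; 0; 0; 0; 0; 0; 1; 0; 0];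
  [:: 0; 0; 0; 1; 1; 0; 1; 0; 1; 0; 0; 0; 0; 1; 1; 0; 0; 0; 1; 0; 0; 1; 0; 0; 0];
  [:: 1; 1; 1; 0; 0; 0; 1; 1; 0; 0; 0; 0; 0; 0; 0; 0; 0; 0; 0; 1; 0; 1; 0; 1; 0];
  [:: 0; 0; 0; 0; 0; 0; 0; 0; 1; 0; 0; 1; 0; 0; 0; 0; 0; 1; 1; 1; 1; 0; 1; 1; 0];
  [:: 1; 1; 0; 0; 1; 1; 0; 0; 0; 0; 0; 1; 1; 0; 1; 0; 0; 0; 0; 0; 0; 0; 1; 0; 0];
  [:: 0; 0; 0; 1; 0; 0; 1; 0; 0; 0; 0; 1; 1; 0; 1; 0; 1; 0; 0; 0; 0; 1; 1; 0; 0];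
  [:: 0; 0; 0; 0; 0; 0; 1; 0; 0; 0; 0; 1; 0; 1; 1; 0; 1; 1; 1; 1; 0; 0; 0; 0; 0];
  [:: 0; 0; 0; 0; 1; 0; 0; 1; 1; 0; 1; 0; 1; 0; 0; 1; 1; 0; 0; 1; 0; 0; 0; 0; 0];
  [:: 1; 1; 1; 0; 0; 1; 0; 0; 1; 0; 0; 0; 1; 0; 1; 1; 1; 0; 0; 0; 1; 0; 1; 1; 0];
  [:: 1; 1; 1; 1; 0; 0; 0; 1; 0; 1; 1; 1; 0; 0; 1; 1; 1; 1; 0; 0; 0; 0; 0; 0; 0];
  [:: 0; 1; 1; 0; 0; 0; 0; 0; 1; 1; 1; 0; 1; 1; 1; 0; 0; 1; 0; 1; 0; 1; 1; 0; 0];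
  [:: 1; 1; 1; 1; 0; 0; 1; 0; 1; 0; 1; 1; 1; 1; 0; 0; 1; 1; 1; 0; 1; 1; 0; 1; 0];
  [:: 0; 0; 1; 1; 1; 1; 0; 1; 1; 1; 0; 0; 0; 1; 1; 1; 1; 1; 1; 1; 0; 0; 1; 1; 0]].

Definition B25 : seq (seq nat) := [::
  [:: 1; 0; 1; 0; 0; 1; 0; 0; 1; 1; 0; 0; 0; 1; 1; 0; 1; 1; 1; 0; 1; 1; 0; 0; 0];
  [:: 1; 1; 0; 0; 1; 0; 1; 1; 1; 1; 0; 0; 0; 0; 1; 0; 0; 0; 1; 0; 1; 1; 0; 0; 0];
  [:: 1; 1; 1; 1; 0; 1; 0; 0; 1; 0; 1; 0; 0; 0; 1; 0; 1; 0; 0; 0; 0; 0; 1; 1; 0];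
  [:: 1; 0; 1; 1; 0; 1; 1; 0; 1; 0; 0; 1; 1; 1; 0; 0; 0; 1; 0; 0; 0; 1; 1; 1; 1];
  [:: 1; 1; 1; 0; 0; 0; 0; 0; 0; 0; 1; 1; 1; 1; 0; 0; 1; 0; 1; 0; 1; 1; 1; 1; 0];
  [:: 1; 1; 1; 1; 0; 0; 1; 0; 0; 1; 1; 1; 0; 1; 1; 0; 1; 1; 0; 0; 0; 1; 0; 0; 1];
  [:: 1; 1; 0; 0; 0; 0; 1; 1; 1; 1; 1; 0; 0; 1; 1; 0; 1; 0; 0; 1; 0; 1; 0; 1; 0];
  [:: 1; 0; 0; 0; 1; 1; 0; 1; 1; 1; 1; 0; 0; 0; 1; 0; 1; 0; 1; 0; 1; 1; 0; 0; 0];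
  [:: 1; 0; 0; 0; 0; 1; 0; 1; 0; 0; 0; 0; 0; 0; 0; 0; 0; 0; 0; 0; 0; 0; 0; 0; 0];
  [:: 1; 0; 1; 1; 1; 0; 1; 0; 1; 1; 1; 0; 1; 1; 1; 0; 0; 0; 0; 1; 0; 0; 1; 0; 1];
  [:: 1; 0; 1; 1; 1; 1; 0; 0; 0; 0; 0; 1; 0; 0; 1; 0; 1; 0; 0; 1; 1; 0; 0; 0; 0];
  [:: 1; 0; 1; 0; 1; 1; 0; 0; 1; 1; 0; 0; 0; 1; 1; 0; 1; 1; 1; 0; 1; 1; 0; 0; 0];
  [:: 1; 1; 1; 1; 1; 1; 0; 0; 1; 1; 1; 1; 0; 0; 0; 0; 0; 0; 0; 1; 1; 0; 1; 1; 0];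
  [:: 1; 0; 1; 1; 0; 0; 1; 0; 0; 1; 1; 1; 0; 1; 1; 0; 1; 1; 0; 0; 0; 1; 0; 0; 1];
  [:: 1; 1; 0; 1; 0; 1; 0; 1; 1; 0; 0; 0; 1; 0; 0; 0; 1; 1; 0; 0; 0; 1; 1; 1; 1];
  [:: 1; 1; 1; 0; 0; 1; 0; 0; 1; 0; 1; 1; 0; 0; 0; 1; 1; 1; 1; 0; 0; 1; 0; 1; 0];
  [:: 1; 0; 1; 0; 0; 0; 0; 0; 0; 0; 0; 0; 0; 0; 0; 0; 0; 0; 0; 0; 0; 0; 0; 0; 0];
  [:: 1; 0; 0; 1; 1; 0; 1; 1; 1; 1; 0; 1; 1; 0; 1; 1; 1; 1; 1; 0; 1; 0; 0; 0; 1];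
  [:: 1; 1; 0; 1; 1; 1; 1; 1; 1; 0; 0; 0; 1; 0; 0; 0; 1; 1; 0; 0; 0; 1; 1; 1; 1];
  [:: 1; 1; 1; 0; 1; 1; 0; 0; 1; 0; 0; 0; 1; 1; 0; 1; 0; 1; 1; 1; 0; 1; 0; 1; 0];
  [:: 1; 1; 1; 0; 1; 0; 0; 0; 1; 1; 1; 1; 0; 0; 0; 0; 0; 0; 0; 1; 1; 0; 1; 1; 0];
  [:: 1; 0; 1; 0; 1; 0; 0; 0; 0; 0; 1; 1; 0; 1; 0; 0; 1; 0; 1; 1; 1; 0; 0; 1; 0];
  [:: 1; 1; 1; 1; 1; 0; 0; 0; 1; 1; 1; 1; 0; 0; 0; 0; 0; 0; 0; 1; 1; 0; 1; 1; 0];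
  [:: 1; 0; 0; 1; 0; 0; 0; 1; 0; 0; 0; 1; 1; 0; 0; 1; 1; 0; 1; 1; 0; 1; 1; 0; 0];
  [:: 1; 0; 0; 0; 0; 0; 0; 0; 0; 0; 0; 0; 0; 0; 0; 0; 0; 0; 0; 0; 0; 0; 0; 0; 0]].

Lemma A25_mulmx_B25 : bmx 25 A25 *m bmx 25 B25 = 1%:M.
Proof. by apply: bmx_mulmx_eq1; vm_compute. Qed.

Lemma count_brow_A25 (i : 'I_25) : count id (brow 25 A25 i) = nth 0%N seq25 i.
Proof.
have : all (fun i => count id (brow 25 A25 i) == nth 0%N seq25 i) (iota 0 25) by vm_compute.
by move/allP/(_ i); rewrite mem_iota ltn_ord => /(_ isT)/eqP.
Qed.

Lemma weight_A25_tail (z : bvec 25) (i : 'I_25) : (13 <= i)%N ->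
  find id (bits z) = i -> (nth 0%N seq25 i <= dH 0 (z *m bmx 25 A25))%N.
Proof.
move=> le13i lead_z; have has_z : has id (bits z) by rewrite has_find lead_z size_bits.
have tail_check : all (fun i => all (fun s =>
      nth 0%N seq25 i <= count id (bmul 25 (nseq i false ++ true :: s) A25))%N
    (bitseqs (24 - i) (24 - i))) (iota 13 12) by vm_compute.
move/allP/(_ i): tail_check; rewrite mem_iota le13i ltn_ord => /(_ isT)/allP.
rewrite -count_bits bits_mulmx (split_find_id has_z) lead_z; apply.
have size_tail : size (drop i.+1 (bits z)) = (24 - i)%N by rewrite size_drop size_bits.
by rewrite -{1}size_tail mem_bitseqs // -size_tail count_size.
Qed.

Lemma weight_A25_head (z : bvec 25) (i : 'I_25) : (i < 13)%N ->
  find id (bits z) = i -> (nth 0%N seq25 i <= dH 0 (z *m bmx 25 A25))%N.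
Proof.
move=> lti13 lead_z; rewrite -count_bits.
have D_le4 : (nth 0%N seq25 i <= 4)%N.
  have : all (fun i => nth 0%N seq25 i <= 4)%N (iota 0 13) by vm_compute.
  by move/allP/(_ i); rewrite mem_iota lti13 => /(_ isT).
have [le4c | ltc4] := leqP 4 (count id (bits (z *m bmx 25 A25))).
  exact: leq_trans D_le4 le4c.
have low_check : all (fun c => nth 0%N seq25 (find id (bmul 25 c B25)) <= count id c)%N
    (bitseqs 25 3) by vm_compute.
move/allP/(_ (bits (z *m bmx 25 A25))): low_check.
rewrite -bits_mulmx -mulmxA A25_mulmx_B25 mulmx1 lead_z; apply.
by have := @mem_bitseqs (bits (z *m bmx 25 A25)) 3; rewrite size_bits; apply.
Qed.

Lemma weight_A25 (z : bvec 25) (i : 'I_25) :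
  find id (bits z) = i -> (nth 0%N seq25 i <= dH 0 (z *m bmx 25 A25))%N.
Proof. by case: (leqP 13 i) => [/weight_A25_tail | /weight_A25_head]; apply. Qed.

Theorem mainTheorem13 :
  exists A : 'M['F_2]_25,
    A \in unitmx /\
    forall i : 'I_25, pdist (linker A) i = nth 0%N seq25 i.
Proof.
exists (bmx 25 A25); split; first exact: (mulmx1_unit A25_mulmx_B25).1.
move=> i; apply: (pdist_eq (pd_pair_delta i)).
  by rewrite dH_linker subr0 -rowE -count_bits bits_row count_brow_A25.
by move=> x y /find_bits_pd_pair; rewrite dH_linker; apply: weight_A25.
Qed.
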